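(* Let $\lambda,\alpha_1,\alpha_2\in\mathbb{C}^*$ and $h_1=\xi_1t+\eta_1$, $h_2=\xi_2t+\eta_2\in\mathbb{C}[t]$ with $\alpha_1\xi_1=\alpha_2\xi_2\neq 0$. Define complex numbers $b_i$ ($i\in\mathbb{Z}_+$) by $b_0=1$, $b_1=0$, $b_{i+1}=ib_i+i(\eta_2-\eta_1)b_{i-1}$ for $i\in\mathbb{N}$, and polynomials $g_n(x)=\sum_{i=0}^n\binom{n}{i}b_{n-i}x^i$ for $n\in\mathbb{Z}_+$. Let $\phi:\Omega(\lambda,\alpha_1,h_1)\to\Omega(\lambda,\alpha_2,h_2)$ be the linear map with $\phi(s^ih_1^n)=s^ig_n(h_2)$ for all $n,i\in\mathbb{Z}_+$ (here $\{s^ih_1^n\}$ is a basis of $\mathbb{C}[t,s]$). Then $\phi$ is an isomorphism of $\mathrm{Vir}$-modules.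
   Context: $\mathrm{Vir}$ is the Lie algebra with basis $\{d_i,c\mid i\in\mathbb{Z}\}$ and brackets $[d_i,d_j]=(j-i)d_{i+j}+\delta_{i,-j}\frac{i^3-i}{12}c$, $[c,d_i]=0$. For $\lambda\in\mathbb{C}^*$, $\alpha\in\mathbb{C}$, $h\in\mathbb{C}[t]$, define operators on $\mathbb{C}[t]$ by $F(f)=\frac{h(t)-h(\alpha)}{t-\alpha}f(t)-f'(t)$ and $G(f)=h(\alpha)f+tF(f)$. The $\mathrm{Vir}$-module $\Omega(\lambda,\alpha,h)$ is the vector space $\mathbb{C}[t,s]$ with $c$ acting as $0$ and $d_m(f(t)s^i)=\lambda^m(s-m)^i\big(sf+mG(f)-m^2\alpha F(f)\big)$ for $m\in\mathbb{Z}$, $i\in\mathbb{Z}_+$, $f\in\mathbb{C}[t]$. *)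

From HB Require Import structures.
From mathcomp Require Import all_boot all_order all_algebra.
From mathcomp Require Import complex.
From mathcomp Require Import Rstruct.
From Stdlib Require Import Rdefinitions.

Set Implicit Arguments.
Unset Strict Implicit.
Unset Printing Implicit Defensive.

Import Order.TTheory GRing.Theory Num.Theory.
Local Open Scope ring_scope.

Definition C : Type := complex Rdefinitions.R.
HB.instance Definition _ := GRing.Field.on C.

(* C[t,s] is represented as {poly {poly C}}: the outer variable 'X is s,
   coefficients are polynomials in t.  An element P is  sum_i P`_i(t) s^i. *)
Notation Vspace := {poly {poly C}}.

Definition svar : Vspace := 'X.
Definition tpoly (f : {poly C}) : Vspace := f%:P.
Definition cst (a : C) : Vspace := a%:P%:P.

Section Omega.
Variables (lam al : C) (h : {poly C}).

Definition Fop (f : {poly C}) : {poly C} :=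
  ((h - (h.[al])%:P) %/ ('X - al%:P)) * f - f^`().

Definition Gop (f : {poly C}) : {poly C} := h.[al] *: f + 'X * Fop f.

(* d_m (f(t) s^i) = lam^m (s - m)^i (s f + m G(f) - m^2 al F(f)) *)
Definition d_basic (m : int) (f : {poly C}) (i : nat) : Vspace :=
  cst (lam ^ m) * (svar - cst (m%:~R)) ^+ i *
  (svar * tpoly f + tpoly ((m%:~R : C) *: Gop f)
    - tpoly (((m ^+ 2)%:~R * al) *: Fop f)).

Definition d_act (m : int) (P : Vspace) : Vspace :=
  \sum_(i < size P) d_basic m P`_i i.

End Omega.

Inductive vir_basis := Vd of int | Vc.

Definition Omega_act (lam al : C) (h : {poly C}) (x : vir_basis) (P : Vspace)
  : Vspace :=
  match x with
  | Vd m => d_act lam al h m P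
  | Vc => 0
  end.

Definition Clinear (phi : Vspace -> Vspace) : Prop :=
  forall (a : C) (u v : Vspace), phi (cst a * u + v) = cst a * phi u + phi v.

(* An isomorphism of Vir-modules Omega(lam,a1,h1) -> Omega(lam,a2,h2):
   a C-linear bijection commuting with the action of every basis element
   of Vir (hence, by linearity, of every element of Vir). *)
Definition Vir_iso (lam a1 a2 : C) (h1 h2 : {poly C}) (phi : Vspace -> Vspace)
  : Prop :=
  [/\ Clinear phi, bijective phi &
      forall (x : vir_basis) (P : Vspace),
        phi (Omega_act lam a1 h1 x P) = Omega_act lam a2 h2 x (phi P)].

(* b_0 = 1, b_1 = 0, b_{i+1} = i b_i + i e b_{i-1};  bpair e n = (b_n, b_{n+1}) *)
Fixpoint bpair (e : C) (n : nat) : C * C :=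
  match n with
  | 0 => (1, 0)
  | k.+1 => let: (x, y) := bpair e k in
            (y, (k.+1)%:R * y + (k.+1)%:R * e * x)
  end.

Definition bseq (e : C) (n : nat) : C := (bpair e n).1.

Definition gpoly (e : C) (n : nat) : {poly C} :=
  \sum_(i < n.+1) (('C(n, i))%:R * bseq e (n - i)) *: 'X^i.

(* Write u = h(t) = xi t + eta.  In this coordinate the s-free part of d_m,
   f |-> m G(f) - m^2 alpha F(f), becomes the operator
     Dlin c eta m : P |-> m ((c + eta) P + (u - eta) (P - P')) - m^2 c (P - P'),
   which depends on alpha and xi only through c = alpha xi.  The g_n form an
   Appell sequence (g_n' = n g_{n-1}) with the three-term recurrence
     g_{n+1} = (u + n) g_n + n (eta2 - eta1 - u) g_{n-1},
   and u^n satisfies the same one with eta2 - eta1 replaced by 0.  Hence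
   Dlin c eta1 m (u^n) and Dlin c eta2 m (g_n) have the same coefficients on
   (u^(n+1), u^n, u^(n-1)) and (g_(n+1), g_n, g_(n-1)), so the linear map
   u^n |-> g_n intertwines them.  phi acts on the coefficients of the powers
   of s by this map (conjugated by the two changes of variable), so it
   commutes with every d_m; it is bijective because g_n is monic of degree n. *)

From Pilot Require Import Defs.
From HB Require Import structures.
From mathcomp Require Import all_boot all_order all_algebra.
From mathcomp Require Import ring complex Rstruct.
Import Order.TTheory GRing.Theory Num.Theory.
Local Open Scope ring_scope.

Lemma sum_coef_pad {R : nzSemiRingType} {V : nmodType} (F : nat -> R -> V)
    (p : {poly R}) n :
  (forall i, F i 0 = 0) -> (size p <= n)%N ->
  \sum_(i < size p) F i p`_i = \sum_(i < n) F i p`_i.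
Proof.
move=> F0 le_pn; rewrite (big_ord_widen _ (fun i => F i p`_i) le_pn) big_mkcond.
by apply: eq_bigr => i _; case: ltnP => // /(nth_default 0) ->; rewrite F0.
Qed.

Lemma bij_inj_surj {T : choiceType} {U : eqType} (f : T -> U) :
  injective f -> (forall y, exists x, f x = y) -> bijective f.
Proof.
move=> finj fsurj; have exf y : exists x, f x == y.
  by have [x <-] := fsurj y; exists x.
exists (fun y => xchoose (exf y)) => [x|y]; last exact/eqP/(xchooseP (exf y)).
by apply: finj; apply/eqP/(xchooseP (exf (f x))).
Qed.

Lemma map_poly_bij {R : nzSemiRingType} (f : R -> R) :
  f 0 = 0 -> bijective f -> bijective (map_poly f).
Proof.
move=> f0 [g fK gK]; have g0 : g 0 = 0 by rewrite -f0 fK.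
by exists (map_poly g) => p; apply/polyP => i; rewrite !coef_map_id0 ?fK ?gK.
Qed.

Lemma comp_poly_bij (R : comNzRingType) (q r : {poly R}) :
  q \Po r = 'X -> r \Po q = 'X -> bijective (comp_poly q).
Proof.
move=> qr rq; exists (comp_poly r) => p /=.
  by rewrite -comp_polyA qr comp_polyXr.
by rewrite -comp_polyA rq comp_polyXr.
Qed.

Lemma linear_poly_eq {V : lmodType C} (f g : {linear {poly C} -> V}) :
  (forall n, f 'X^n = g 'X^n) -> f =1 g.
Proof.
move=> fgX p; rewrite -[p]coefK poly_def !linear_sum; apply: eq_bigr => i _.
by rewrite !linearZ fgX.
Qed.

Lemma bseqSS e k :
  Defs.bseq e k.+2 = k.+1%:R * Defs.bseq e k.+1 + k.+1%:R * e * Defs.bseq e k.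
Proof. by rewrite /Defs.bseq /=; case: (bpair e k). Qed.

Lemma bseq_0 n : Defs.bseq 0 n = (n == 0)%:R.
Proof.
elim/ltn_ind: n => -[|[|n]] IH //.
by rewrite bseqSS !IH // mulr0 !mul0r addr0.
Qed.

Lemma coef_gpoly e n k : (gpoly e n)`_k = 'C(n, k)%:R * Defs.bseq e (n - k).
Proof.
rewrite /gpoly -(poly_def n.+1 (fun i => 'C(n, i)%:R * Defs.bseq e (n - i))).
by rewrite coef_poly; case: ltnP => // ltnk; rewrite bin_small ?mul0r.
Qed.

Lemma coef_gpoly_diag e n : (gpoly e n)`_n = 1.
Proof. by rewrite coef_gpoly binn subnn mul1r. Qed.

Lemma gpoly_0 n : gpoly 0 n = 'X^n.
Proof.
apply/polyP => k; rewrite coef_gpoly coefXn bseq_0 subn_eq0.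
case: (ltngtP k n) => [ltkn|ltnk|->]; last by rewrite binn mul1r.
- by rewrite mulr0.
- by rewrite bin_small ?mul0r.
Qed.

Lemma size_gpoly e n : size (gpoly e n) = n.+1.
Proof.
rewrite /gpoly -(poly_def n.+1 (fun i => 'C(n, i)%:R * Defs.bseq e (n - i))).
by rewrite size_poly_eq //= binn subnn mul1r oner_neq0.
Qed.

Lemma horner0_gpoly e n : (gpoly e n).[0] = Defs.bseq e n.
Proof. by rewrite horner_coef0 coef_gpoly bin0 subn0 mul1r. Qed.

Lemma deriv_gpoly e n : (gpoly e n)^`() = n%:R *: gpoly e n.-1.
Proof.
apply/polyP => k; rewrite coef_deriv coefZ !coef_gpoly.
case: n => [|n]; first by rewrite bin_small // !mul0r mul0rn.
by rewrite subSS /= -mulr_natl mulrA -natrM mul_bin_diag natrM; ring.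
Qed.

Lemma deriv_eq0_horner0 (p : {poly C}) : p^`() = 0 -> p.[0] = 0 -> p = 0.
Proof.
move=> /polyP dp0 p00; apply/polyP => -[|k].
  by rewrite coef0 -horner_coef0.
have /eqP := dp0 k; rewrite coef_deriv coef0 -mulr_natr mulf_eq0.
by rewrite coef0 (@pnatr_eq0 (complex Rdefinitions.R)) orbF => /eqP.
Qed.

Lemma gpolyS e n : gpoly e n.+1 =
  ('X + n%:R%:P) * gpoly e n + n%:R *: ((e%:P - 'X) * gpoly e n.-1).
Proof.
pose Q n := gpoly e n.+1 - ('X + n%:R%:P) * gpoly e n
            - n%:R *: ((e%:P - 'X) * gpoly e n.-1).
have dQ m : (Q m)^`() = m%:R *: Q m.-1.
  rewrite /Q !(derivB, derivN, derivD, derivM, derivZ, derivX, derivC).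
  rewrite !deriv_gpoly.
  by case: m => [|m] /=; rewrite -!mul_polyC; ring.
suff /eqP : Q n = 0 by rewrite subr_eq0 subr_eq addrC => /eqP.
elim: n => [|n IH]; apply: deriv_eq0_horner0;
  rewrite ?dQ ?scale0r ?IH ?scaler0 // /Q;
  rewrite !(hornerD, hornerN, hornerZ, hornerM, hornerX, hornerC);
  rewrite !horner0_gpoly.
- by rewrite /Defs.bseq /=; ring.
- by rewrite bseqSS /=; ring.
Qed.

Definition appell (e : C) (F : {poly C}) : {poly C} :=
  \sum_(k < size F) F`_k *: gpoly e k.

Lemma appell_is_linear e : linear (appell e).
Proof.
move=> a F G; pose n := maxn (size F) (size G).
have leFn : (size F <= n)%N by rewrite leq_maxl.
have leGn : (size G <= n)%N by rewrite leq_maxr.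
have leFGn : (size (a *: F + G)%R <= n)%N.
  rewrite (leq_trans (size_add _ _)) // geq_max leGn andbT.
  exact: leq_trans (size_scale_leq _ _) leFn.
have pad := sum_coef_pad (fun k c => c *: gpoly e k) _ _ (fun k => scale0r _).
rewrite /appell (pad _ _ leFn) (pad _ _ leGn) (pad _ _ leFGn).
rewrite scaler_sumr -big_split; apply: eq_bigr => k _.
by rewrite coefD coefZ scalerDl scalerA.
Qed.

HB.instance Definition _ e :=
  GRing.isLinear.Build C {poly C} {poly C} *:%R (appell e) (appell_is_linear e).

Lemma appell_Xn e n : appell e 'X^n = gpoly e n.
Proof.
rewrite /appell size_polyXn big_ord_recr /= coefXn eqxx scale1r big1 ?add0r //.
by move=> k _; rewrite coefXn (ltn_eqF (ltn_ord k)) scale0r.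
Qed.

Lemma coef_appell_lead e F : (appell e F)`_(size F).-1 = lead_coef F.
Proof.
rewrite /appell lead_coefE; case sF: (size F) => [|n].
  by rewrite big_ord0 coef0 nth_default ?sF.
rewrite big_ord_recr coefD coef_sum coefZ coef_gpoly_diag mulr1.
rewrite big1 ?add0r // => k _.
by rewrite coefZ coef_gpoly bin_small ?mul0r ?mulr0 //=.
Qed.

Lemma appell_inj e : injective (appell e).
Proof.
move=> F G eqFG; apply/eqP; rewrite -subr_eq0 -lead_coef_eq0.
by rewrite -(coef_appell_lead e) linearB /= eqFG subrr coef0.
Qed.

Lemma appell_surj e G : exists F, appell e F = G.
Proof.
elim: (size G) {-2}G (leqnn (size G)) => [|n IH] {}G leGn.
  by exists 0; move: leGn; rewrite leqn0 size_poly_eq0 linear0 => /eqP.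
have [|F eqFG'] := IH (G - G`_n *: gpoly e n).
  apply/leq_sizeP => k; rewrite leq_eqVlt => /orP[/eqP <-|ltnk].
    by rewrite coefB coefZ coef_gpoly_diag mulr1 subrr.
  by rewrite coefB coefZ !(leq_sizeP _ _ _ _ ltnk) ?size_gpoly // mulr0 subr0.
by exists (F + G`_n *: 'X^n); rewrite linearD linearZ /= appell_Xn eqFG' subrK.
Qed.

Lemma appell_bij e : bijective (appell e).
Proof. exact: bij_inj_surj (@appell_inj e) (@appell_surj e). Qed.

Definition lin (x e : C) : {poly C} := x *: 'X + e%:P.
Definition linv (x e : C) : {poly C} := x^-1 *: ('X - e%:P).

Section LinearChange.
Variables (x e : C).
Hypothesis x_neq0 : x != 0.

Lemma comp_linv_lin : linv x e \Po lin x e = 'X.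
Proof.
rewrite /linv /lin comp_polyZ comp_polyB comp_polyX comp_polyC.
by rewrite addrK scalerA mulVf // scale1r.
Qed.

Lemma comp_lin_linv : lin x e \Po linv x e = 'X.
Proof.
rewrite /linv /lin comp_polyD comp_polyZ comp_polyX comp_polyC.
by rewrite scalerA mulfV // scale1r subrK.
Qed.

End LinearChange.

Lemma Fop_comp_lin al x e G :
  Fop al (lin x e) (G \Po lin x e) = x *: ((G - G^`()) \Po lin x e).
Proof.
rewrite /Fop; have -> : (lin x e - (lin x e).[al]%:P) %/ ('X - al%:P) = x%:P.
  have -> : lin x e - (lin x e).[al]%:P = x%:P * ('X - al%:P).
    by rewrite /lin !hornerE -!mul_polyC; ring.
  by rewrite mulpK // monic_neq0 // monicXsubC.
rewrite deriv_comp /lin derivD derivZ derivX derivC addr0 comp_polyB.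
by rewrite -!mul_polyC; ring.
Qed.

Lemma Gop_comp_lin al x e G :
  Gop al (lin x e) (G \Po lin x e) =
  ((al * x + e) *: G + ('X - e%:P) * (G - G^`())) \Po lin x e.
Proof.
rewrite /Gop Fop_comp_lin /lin !hornerE.
rewrite !(comp_polyB, comp_polyD, comp_polyZ, comp_polyM, comp_polyX,
          comp_polyC).
by rewrite -!mul_polyC; ring.
Qed.

Definition Dpart al h (m : int) (f : {poly C}) : {poly C} :=
  m%:~R *: Gop al h f - ((m ^+ 2)%:~R * al) *: Fop al h f.

Lemma d_basicE lam al h m f i :
  d_basic lam al h m f i =
  cst (lam ^ m) * (svar - cst m%:~R) ^+ i *
  (svar * tpoly f + tpoly (Dpart al h m f)).
Proof. by rewrite /d_basic /Dpart /tpoly polyCB addrA. Qed.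

Lemma d_basic0 lam al h m i : d_basic lam al h m 0 i = 0.
Proof.
rewrite d_basicE /Dpart /Gop /Fop deriv0 !(mulr0, subr0, scaler0) /tpoly.
by rewrite !(add0r, scaler0) polyC0 mulr0.
Qed.

Definition Dlin (c e M : C) (G : {poly C}) : {poly C} :=
  M *: ((c + e) *: G + ('X - e%:P) * (G - G^`())) - (M ^+ 2 * c) *: (G - G^`()).

Lemma Dlin_is_linear c e M : linear (Dlin c e M).
Proof. by move=> a F G; rewrite /Dlin derivD derivZ -!mul_polyC; ring. Qed.

HB.instance Definition _ c e M :=
  GRing.isLinear.Build C {poly C} {poly C} *:%R (Dlin c e M)
    (Dlin_is_linear c e M).

Lemma Dpart_comp_lin al x e m G :
  Dpart al (lin x e) m (G \Po lin x e) = Dlin (al * x) e m%:~R G \Po lin x e.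
Proof.
rewrite /Dpart /Dlin Fop_comp_lin Gop_comp_lin.
rewrite !(comp_polyB, comp_polyZ) scalerA rmorphXn /=.
by rewrite -!mul_polyC; ring.
Qed.

Lemma Dlin_gpoly c e d M n :
  Dlin c e M (gpoly d n) =
  M *: gpoly d n.+1 + (M * (c - n%:R) - M ^+ 2 * c) *: gpoly d n
  + (M * n%:R * (e - d) + M ^+ 2 * c * n%:R) *: gpoly d n.-1.
Proof. by rewrite /Dlin deriv_gpoly gpolyS -!mul_polyC; ring. Qed.

(* The coefficients in Dlin_gpoly depend on (e, d) only through e - d, which is
   e1 both for (e1, 0), where g_n = 'X^n, and for (e2, e2 - e1). *)
Lemma appell_Dlin c e1 e2 M F :
  appell (e2 - e1) (Dlin c e1 M F) = Dlin c e2 M (appell (e2 - e1) F).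
Proof.
move: F; apply: (linear_poly_eq (appell (e2 - e1) \o Dlin c e1 M)
                             (Dlin c e2 M \o appell (e2 - e1))) => n /=.
rewrite -gpoly_0 Dlin_gpoly !gpoly_0 !linearD /= ![appell _ (_ *: _)]linearZ /=.
by rewrite !appell_Xn Dlin_gpoly; congr (_ *: _ + _ *: _ + _ *: _); ring.
Qed.

Definition tmap (x1 e1 x2 e2 : C) : {poly C} -> {poly C} :=
  comp_poly (lin x2 e2) \o appell (e2 - e1) \o comp_poly (linv x1 e1).

Section Tmap.
Variables (x1 e1 x2 e2 : C).
Hypotheses (x1_neq0 : x1 != 0) (x2_neq0 : x2 != 0).

Lemma tmap_comp_lin G :
  tmap x1 e1 x2 e2 (G \Po lin x1 e1) = appell (e2 - e1) G \Po lin x2 e2.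
Proof. by rewrite /tmap /= -comp_polyA comp_lin_linv // comp_polyXr. Qed.

Lemma tmap_lin_exp n :
  tmap x1 e1 x2 e2 (lin x1 e1 ^+ n) = gpoly (e2 - e1) n \Po lin x2 e2.
Proof. by rewrite -comp_Xn_poly tmap_comp_lin appell_Xn. Qed.

Lemma tmap_bij : bijective (tmap x1 e1 x2 e2).
Proof.
apply: bij_comp.
  apply: bij_comp; last exact: appell_bij.
  exact: comp_poly_bij (comp_lin_linv _ _ x2_neq0) (comp_linv_lin _ _ x2_neq0).
exact: comp_poly_bij (comp_linv_lin _ _ x1_neq0) (comp_lin_linv _ _ x1_neq0).
Qed.

Lemma tmap_Dpart al1 al2 m f : al1 * x1 = al2 * x2 ->
  tmap x1 e1 x2 e2 (Dpart al1 (lin x1 e1) m f) =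
  Dpart al2 (lin x2 e2) m (tmap x1 e1 x2 e2 f).
Proof.
move=> eq_c; have -> : f = (f \Po linv x1 e1) \Po lin x1 e1.
  by rewrite -comp_polyA comp_linv_lin // comp_polyXr.
by rewrite Dpart_comp_lin !tmap_comp_lin appell_Dlin eq_c Dpart_comp_lin.
Qed.

End Tmap.

Section MapPolyLinear.
Variable psi : {linear {poly C} -> {poly C}}.

Lemma map_poly_mulCs (q : {poly C}) (P : Vspace) :
  map_poly psi (map_poly polyC q * P) = map_poly polyC q * map_poly psi P.
Proof.
apply/polyP => i; rewrite coef_map_id0 ?linear0 // !coefM linear_sum.
apply: eq_bigr => j _; rewrite coef_map_id0 ?linear0 // coef_map /=.
by rewrite !mul_polyC linearZ.
Qed.

Lemma map_poly_tpoly f : map_poly psi (tpoly f) = tpoly (psi f).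
Proof. exact: map_polyC. Qed.

Lemma map_poly_basis i f :
  map_poly psi (svar ^+ i * tpoly f) = svar ^+ i * tpoly (psi f).
Proof.
have -> : svar ^+ i = map_poly polyC 'X^i by rewrite rmorphXn /= map_polyX.
by rewrite map_poly_mulCs map_poly_tpoly.
Qed.

Lemma Clinear_map_poly : Clinear (map_poly psi).
Proof.
move=> a u v; have -> : cst a = map_poly polyC a%:P by rewrite map_polyC.
by rewrite raddfD /= map_poly_mulCs.
Qed.

Variables (lam al1 al2 : C) (h1 h2 : {poly C}) (m : int).
Hypothesis psi_Dpart :
  forall f, psi (Dpart al1 h1 m f) = Dpart al2 h2 m (psi f).

Lemma map_poly_d_basic f i :
  map_poly psi (d_basic lam al1 h1 m f i) = d_basic lam al2 h2 m (psi f) i.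
Proof.
rewrite !d_basicE; have -> : cst (lam ^ m) * (svar - cst m%:~R) ^+ i =
    map_poly polyC ((lam ^ m)%:P * ('X - (m%:~R)%:P) ^+ i).
  by rewrite rmorphM rmorphXn rmorphB /= map_polyX !map_polyC.
have -> : svar = map_poly polyC 'X by rewrite map_polyX.
rewrite map_poly_mulCs raddfD /= map_poly_mulCs.
by rewrite !map_poly_tpoly psi_Dpart.
Qed.

Lemma map_poly_d_act P :
  map_poly psi (d_act lam al1 h1 m P) = d_act lam al2 h2 m (map_poly psi P).
Proof.
rewrite /d_act raddf_sum.
rewrite (sum_coef_pad (fun i f => d_basic lam al2 h2 m f i) _ (size P)).
- apply: eq_bigr => i _; rewrite coef_map_id0 ?linear0 //.
  exact: map_poly_d_basic.
- by move=> i; rewrite d_basic0.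
- exact: size_poly.
Qed.

End MapPolyLinear.

Section Clinear.
Variable phi : Vspace -> Vspace.
Hypothesis phiL : Clinear phi.

Lemma ClinearD u v : phi (u + v) = phi u + phi v.
Proof. by have := phiL 1 u v; rewrite /cst !polyC1 !mul1r. Qed.

Lemma Clinear0 : phi 0 = 0.
Proof. by apply: (@addrI _ (phi 0)); rewrite -ClinearD !addr0. Qed.

Lemma ClinearZ a u : phi (cst a * u) = cst a * phi u.
Proof. by rewrite -[cst a * u]addr0 phiL Clinear0 addr0. Qed.

Lemma Clinear_sum (I : Type) (r : seq I) (F : I -> Vspace) :
  phi (\sum_(j <- r) F j) = \sum_(j <- r) phi (F j).
Proof. exact: (big_morph phi ClinearD Clinear0). Qed.

End Clinear.

Lemma Vspace_expand (x e : C) (P : Vspace) : x != 0 ->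
  P = \sum_(i < size P) \sum_(k < size (P`_i \Po linv x e))
        cst ((P`_i \Po linv x e)`_k) * (svar ^+ i * tpoly (lin x e ^+ k)).
Proof.
move=> x_neq0; rewrite -[P in LHS]coefK poly_def; apply: eq_bigr => i _.
have {1}-> : P`_i = (P`_i \Po linv x e) \Po lin x e.
  by rewrite -comp_polyA comp_linv_lin // comp_polyXr.
rewrite comp_polyE -mul_polyC mulrC /tpoly rmorph_sum mulr_sumr /=.
by apply: eq_bigr => k _; rewrite -mul_polyC polyCM /cst /svar mulrCA.
Qed.

Lemma Clinear_eq_on_basis (x e : C) (phi1 phi2 : Vspace -> Vspace) : x != 0 ->
  Clinear phi1 -> Clinear phi2 ->
  (forall n i, phi1 (svar ^+ i * tpoly (lin x e ^+ n)) =
               phi2 (svar ^+ i * tpoly (lin x e ^+ n))) ->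
  phi1 =1 phi2.
Proof.
move=> x_neq0 phi1L phi2L eq_basis P; rewrite (Vspace_expand x e P x_neq0).
rewrite !Clinear_sum //; apply: eq_bigr => i _.
rewrite !Clinear_sum //; apply: eq_bigr => k _.
by rewrite !ClinearZ // eq_basis.
Qed.

Theorem lemma3p3 (lam a1 a2 x1 e1 x2 e2 : C) :
  lam != 0 -> a1 != 0 -> a2 != 0 ->
  a1 * x1 = a2 * x2 -> a1 * x1 != 0 ->
  let h1 := x1 *: 'X + e1%:P in
  let h2 := x2 *: 'X + e2%:P in
  let spec (phi : Vspace -> Vspace) :=
    Clinear phi /\
    forall n i : nat,
      phi (svar ^+ i * tpoly (h1 ^+ n)) =
      svar ^+ i * tpoly (gpoly (e2 - e1) n \Po h2) in
  (exists phi, spec phi) /\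
  (forall phi, spec phi -> Vir_iso lam a1 a2 h1 h2 phi).
Proof.
move=> _ _ _ eq_c c_neq0 /=.
have x1_neq0 : x1 != 0 by apply: contraNneq c_neq0 => ->; rewrite mulr0.
have x2_neq0 : x2 != 0.
  by rewrite eq_c in c_neq0; apply: contraNneq c_neq0 => ->; rewrite mulr0.
pose psi := tmap x1 e1 x2 e2.
have psi_basis n i : map_poly psi (svar ^+ i * tpoly (lin x1 e1 ^+ n)) =
                     svar ^+ i * tpoly (gpoly (e2 - e1) n \Po lin x2 e2).
  by rewrite map_poly_basis; congr (_ * tpoly _); exact: tmap_lin_exp.
split; first by exists (map_poly psi); split; [exact: Clinear_map_poly |].
move=> phi [phiL phi_basis].
have phiE : map_poly psi =1 phi.
  apply: (Clinear_eq_on_basis x1 e1 _ _ x1_neq0 (Clinear_map_poly psi) phiL).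
  move=> n i.
  by rewrite psi_basis phi_basis.
split=> //; first apply: (eq_bij _ phiE).
  exact: map_poly_bij psi (linear0 psi) (tmap_bij _ _ _ _ x1_neq0 x2_neq0).
case=> [m|] P /=; rewrite -!phiE ?map_poly0 //.
by apply: map_poly_d_act => f; apply: tmap_Dpart.
Qed.
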